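(* Strengthened arities, with the composition $(H,\rho)\cdot(K,\sigma):=(H\cdot K,\theta)$ where $\theta_{X,(Z,e)}:=H(\sigma_{X,(Z,e)})\circ\rho_{K(X),(Z,e)}\colon H(K(X))\cdot Z\to H(K(X\cdot Z))$, form a strict monoidal category.
   Context: Conventions: for endofunctors $F,G$, $F\cdot G$ denotes $F\circ G$; whiskering is written $F\alpha$, $\alpha F$. An endofunctor is $\omega$-cocontinuous if it preserves colimits of $\omega$-chains; $\mathrm{End}^\omega({\mathsf{Set}})$ is the category of such endofunctors of ${\mathsf{Set}}$. $\mathrm{End}^\omega_*({\mathsf{Set}})$ is the category of pointed $\omega$-cocontinuous endofunctors $(F,e)$, $e\colon I\to F$ with $I$ the identity functor; morphisms $f$ satisfy $f\circ e_1=e_2$. Pointed endofunctors compose as $(Z_1\cdot Z_2,e_1\cdot e_2)$, $e_1\cdot e_2$ the horizontal composite. A strengthened arity is a pair $(H,\theta)$ where $H$ is an $\omega$-cocontinuous endofunctor of $\mathrm{End}^\omega({\mathsf{Set}})$ and $\theta$ is a natural transformation with components $\theta_{X,(Z,e)}\colon H(X)\cdot Z\to H(X\cdot Z)$, natural in $X\in\mathrm{End}^\omega({\mathsf{Set}})$ and $(Z,e)\in\mathrm{End}^\omega_*({\mathsf{Set}})$, such that $\theta_{X,(I,1_I)}=1_{H(X)}$ and $\theta_{X,(Z_1\cdot Z_2,e_1\cdot e_2)}=\theta_{X\cdot Z_1,(Z_2,e_2)}\circ(\theta_{X,(Z_1,e_1)}Z_2)$. A morphism $(H_1,\theta_1)\to(H_2,\theta_2)$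 is a natural transformation $m\colon H_1\to H_2$ with $m_{X\cdot Z}\circ(\theta_1)_{X,Z}=(\theta_2)_{X,Z}\circ m_XZ$ for all $X$ and pointed $Z$. *)

(* Endofunctors of Set are modelled as raw data (object map on Type,
   morphism map); functor laws, omega-cocontinuity, naturality are separate
   predicates.  Primitive projections give definitional eta for records, so
   X . I, I . X and (X . Y) . Z = X . (Y . Z) hold by conversion. *)
Set Primitive Projections.

Record Fun : Type := MkFun {
  fob : Type -> Type ;
  fmap : forall A B : Type, (A -> B) -> fob A -> fob B }.
Arguments fmap _ {A B} _ _.

Definition Nat (F G : Fun) : Type := forall A : Type, fob F A -> fob G A.

Definition is_nat (F G : Fun) (a : Nat F G) : Prop :=
  forall (A B : Type) (f : A -> B) (x : fob F A), a B (fmap F f x) = fmap G f (a A x).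
Arguments is_nat {F G} a.

Definition is_functor (F : Fun) : Prop :=
  (forall A (x : fob F A), fmap F (fun a : A => a) x = x) /\
  (forall A B C (f : A -> B) (g : B -> C) (x : fob F A),
      fmap F (fun a => g (f a)) x = fmap F g (fmap F f x)).

Definition is_colim_Set (D : nat -> Type) (d : forall n, D n -> D (S n))
  (C : Type) (c : forall n, D n -> C) : Prop :=
  (forall n x, c (S n) (d n x) = c n x) /\
  forall (Y : Type) (y : forall n, D n -> Y),
    (forall n x, y (S n) (d n x) = y n x) ->
    exists u : C -> Y, (forall n x, u (c n x) = y n x) /\
      forall u' : C -> Y, (forall n x, u' (c n x) = y n x) -> forall z, u' z = u z.

Definition omega_cocontinuous (F : Fun) : Prop :=
  forall D d C c, is_colim_Set D d C c ->
    is_colim_Set (fun n => fob F (D n)) (fun n => fmap F (d n))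
                 (fob F C) (fun n => fmap F (c n)).

Definition is_ofun (F : Fun) : Prop := is_functor F /\ omega_cocontinuous F.

Definition Idfun : Fun := MkFun (fun A => A) (fun A B f => f).
Definition compF (X Z : Fun) : Fun :=
  MkFun (fun A => fob X (fob Z A)) (fun A B f => fmap X (fmap Z f)).

Definition idnat (F : Fun) : Nat F F := fun A x => x.
Definition vcomp {F G H : Fun} (b : Nat G H) (a : Nat F G) : Nat F H :=
  fun A x => b A (a A x).
Definition whiskerR {X Y : Fun} (Z : Fun) (a : Nat X Y) : Nat (compF X Z) (compF Y Z) :=
  fun A => a (fob Z A).
Definition whiskerL (X : Fun) {Z Z' : Fun} (f : Nat Z Z') : Nat (compF X Z) (compF X Z') :=
  fun A => fmap X (f A).
Definition pt_comp {Z1 Z2 : Fun} (e1 : Nat Idfun Z1) (e2 : Nat Idfun Z2)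
  : Nat Idfun (compF Z1 Z2) := fun A x => e1 (fob Z2 A) (e2 A x).

Definition is_pointed (Z : Fun) (e : Nat Idfun Z) : Prop := is_ofun Z /\ is_nat e.

Definition is_chain_End (Xs : nat -> Fun) (al : forall n, Nat (Xs n) (Xs (S n))) : Prop :=
  (forall n, is_ofun (Xs n)) /\ (forall n, is_nat (al n)).

Definition is_colim_End (Xs : nat -> Fun) (al : forall n, Nat (Xs n) (Xs (S n)))
  (C : Fun) (c : forall n, Nat (Xs n) C) : Prop :=
  is_ofun C /\ (forall n, is_nat (c n)) /\
  (forall n A x, c (S n) A (al n A x) = c n A x) /\
  forall (Y : Fun) (y : forall n, Nat (Xs n) Y),
    is_ofun Y -> (forall n, is_nat (y n)) ->
    (forall n A x, y (S n) A (al n A x) = y n A x) ->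
    exists u : Nat C Y, is_nat u /\ (forall n A x, u A (c n A x) = y n A x) /\
      forall u' : Nat C Y, is_nat u' -> (forall n A x, u' A (c n A x) = y n A x) ->
        forall A x, u' A x = u A x.

Record Fun2 : Type := MkFun2 {
  hob : Fun -> Fun ;
  hmap : forall X Y : Fun, Nat X Y -> Nat (hob X) (hob Y) }.
Arguments hmap _ {X Y} _ _ _.

Definition is_endo_omega (H : Fun2) : Prop :=
  (forall X, is_ofun X -> is_ofun (hob H X)) /\
  (forall X Y (a : Nat X Y), is_ofun X -> is_ofun Y -> is_nat a -> is_nat (hmap H a)) /\
  (forall X, is_ofun X -> forall A x, hmap H (idnat X) A x = x) /\
  (forall X Y W (a : Nat X Y) (b : Nat Y W), is_ofun X -> is_ofun Y -> is_ofun W ->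
      is_nat a -> is_nat b ->
      forall A x, hmap H (vcomp b a) A x = hmap H b A (hmap H a A x)) /\
  (forall Xs al C c, is_chain_End Xs al -> is_colim_End Xs al C c ->
      is_colim_End (fun n => hob H (Xs n)) (fun n => hmap H (al n))
                   (hob H C) (fun n => hmap H (c n))).

Definition theta_ty (H : Fun2) : Type :=
  forall (X Z : Fun) (e : Nat Idfun Z), Nat (compF (hob H X) Z) (hob H (compF X Z)).

Definition is_strength (H : Fun2) (th : theta_ty H) : Prop :=
  (forall X Z e, is_ofun X -> is_pointed Z e -> is_nat (th X Z e)) /\
  (forall X X' Z e (a : Nat X X'), is_ofun X -> is_ofun X' -> is_nat a -> is_pointed Z e ->
     forall A x, hmap H (whiskerR Z a) A (th X Z e A x)
                 = th X' Z e A (hmap H a (fob Z A) x)) /\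
  (forall X Z Z' e e' (f : Nat Z Z'), is_ofun X -> is_pointed Z e -> is_pointed Z' e' ->
     is_nat f -> (forall A x, f A (e A x) = e' A x) ->
     forall A x, hmap H (whiskerL X f) A (th X Z e A x)
                 = th X Z' e' A (fmap (hob H X) (f A) x)) /\
  (forall X, is_ofun X -> forall A x, th X Idfun (idnat Idfun) A x = x) /\
  (forall X Z1 Z2 e1 e2, is_ofun X -> is_pointed Z1 e1 -> is_pointed Z2 e2 ->
     forall A x, th X (compF Z1 Z2) (pt_comp e1 e2) A x
                 = th (compF X Z1) Z2 e2 A (th X Z1 e1 (fob Z2 A) x)).

Record SArity : Type := MkSArity { ar_H : Fun2 ; ar_th : theta_ty ar_H }.

Definition is_sarity (a : SArity) : Prop :=
  is_endo_omega (ar_H a) /\ is_strength (ar_H a) (ar_th a).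

Definition SHom (a b : SArity) : Type :=
  forall X : Fun, Nat (hob (ar_H a) X) (hob (ar_H b) X).

Definition is_sarity_mor (a b : SArity) (m : SHom a b) : Prop :=
  (forall X, is_ofun X -> is_nat (m X)) /\
  (forall X Y (al : Nat X Y), is_ofun X -> is_ofun Y -> is_nat al ->
     forall A x, hmap (ar_H b) al A (m X A x) = m Y A (hmap (ar_H a) al A x)) /\
  (forall X Z e, is_ofun X -> is_pointed Z e ->
     forall A x, m (compF X Z) A (ar_th a X Z e A x) = ar_th b X Z e A (m X (fob Z A) x)).

Definition mor_eq {a b : SArity} (m n : SHom a b) : Prop :=
  forall X, is_ofun X -> forall A x, m X A x = n X A x.

Definition obj_eq (a b : SArity) : Prop :=
  exists p : ar_H a = ar_H b,
    forall X Z e, is_ofun X -> is_pointed Z e -> forall A x,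
      (match p in _ = H return theta_ty H with eq_refl => ar_th a end) X Z e A x
      = ar_th b X Z e A x.

Definition sid (a : SArity) : SHom a a := fun X A x => x.
Definition scomp {a b c : SArity} (m : SHom b c) (n : SHom a b) : SHom a c :=
  fun X A x => m X A (n X A x).

Definition compF2 (H K : Fun2) : Fun2 :=
  MkFun2 (fun X => hob H (hob K X)) (fun X Y a => hmap H (hmap K a)).

Definition sar_tensor (a b : SArity) : SArity :=
  MkSArity (compF2 (ar_H a) (ar_H b))
    (fun X Z e A x => hmap (ar_H a) (ar_th b X Z e) A (ar_th a (hob (ar_H b) X) Z e A x)).

Definition Id2 : Fun2 := MkFun2 (fun X => X) (fun X Y a => a).
Definition sar_unit : SArity := MkSArity Id2 (fun X Z e A x => x).

Definition tensor_mor {a a' b b' : SArity} (m : SHom a a') (n : SHom b b')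
  : SHom (sar_tensor a b) (sar_tensor a' b') :=
  fun X A x => m (hob (ar_H b') X) A (hmap (ar_H a) (n X) A x).

(* Everything reduces to functoriality of the arity functors. The composite
   strength H(sigma) o rho inherits naturality from the naturality squares of
   rho and sigma, glued by H, and its two coherence axioms from those of rho
   and sigma; composites of ω-cocontinuous functors are ω-cocontinuous. The
   strictness laws hold because, with primitive projections, composition of
   endofunctors is strictly associative and unital by conversion, so the
   remaining equations are instances of H(b o a) = H(b) o H(a) and H(1) = 1. *)
From Stdlib Require Import FunctionalExtensionality.

Lemma nat_ext (F G : Fun) (a b : Nat F G) :
  (forall A x, a A x = b A x) -> a = b.
Proof.
  intros hab; apply functional_extensionality_dep; intros A.
  apply functional_extensionality; intros x; apply hab.
Qed.

Lemma hmap_ext (H : Fun2) (X Y : Fun) (a b : Nat X Y) :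
  (forall A x, a A x = b A x) -> forall A x, hmap H a A x = hmap H b A x.
Proof. intros hab; rewrite (nat_ext _ _ a b hab); reflexivity. Qed.

Lemma is_nat_vcomp (F G K : Fun) (b : Nat G K) (a : Nat F G) :
  is_nat a -> is_nat b -> is_nat (vcomp b a).
Proof. intros ha hb A B f x; unfold vcomp; rewrite ha, hb; reflexivity. Qed.

Lemma is_nat_whiskerR (X Y Z : Fun) (a : Nat X Y) :
  is_nat a -> is_nat (whiskerR Z a).
Proof. intros ha A B f x; apply ha. Qed.

Lemma is_nat_whiskerL (X Z Z' : Fun) (f : Nat Z Z') :
  is_ofun X -> is_nat f -> is_nat (whiskerL X f).
Proof.
  intros [[_ X_comp] _] hf A B g x; unfold whiskerL; simpl.
  rewrite <- !X_comp; f_equal.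
  apply functional_extensionality; intros y; apply hf.
Qed.

Lemma is_ofun_compF (X Z : Fun) : is_ofun X -> is_ofun Z -> is_ofun (compF X Z).
Proof.
  intros [[X_id X_comp] X_cocont] [[Z_id Z_comp] Z_cocont].
  split; [split|].
  - intros A x; simpl.
    transitivity (fmap X (fun y : fob Z A => y) x); [|apply X_id].
    f_equal; apply functional_extensionality; intros y; apply Z_id.
  - intros A B C f g x; simpl.
    rewrite <- X_comp; f_equal.
    apply functional_extensionality; intros y; apply Z_comp.
  - intros D d C c hcolim; exact (X_cocont _ _ _ _ (Z_cocont _ _ _ _ hcolim)).
Qed.

(* [pt_comp e1 e2] is convertible to [vcomp (whiskerR _ e1) e2], so these hints
   also establish the pointedness of composite pointed endofunctors. *)
#[local] Hint Resolve is_nat_vcomp is_nat_whiskerR is_nat_whiskerL is_ofun_compF : core.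
#[local] Hint Extern 1 (is_pointed _ _) => split : core.

Section EndoOmega.
Variable H : Fun2.
Hypothesis hH : is_endo_omega H.

Lemma is_ofun_hob (X : Fun) : is_ofun X -> is_ofun (hob H X).
Proof. exact (proj1 hH X). Qed.

Lemma is_nat_hmap (X Y : Fun) (a : Nat X Y) :
  is_ofun X -> is_ofun Y -> is_nat a -> is_nat (hmap H a).
Proof. exact (proj1 (proj2 hH) X Y a). Qed.

Lemma hmap_idnat (X : Fun) : is_ofun X -> forall A x, hmap H (idnat X) A x = x.
Proof. exact (proj1 (proj2 (proj2 hH)) X). Qed.

Lemma hmap_vcomp (X Y W : Fun) (a : Nat X Y) (b : Nat Y W) :
  is_ofun X -> is_ofun Y -> is_ofun W -> is_nat a -> is_nat b ->
  forall A x, hmap H (vcomp b a) A x = hmap H b A (hmap H a A x).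
Proof. exact (proj1 (proj2 (proj2 (proj2 hH))) X Y W a b). Qed.

Lemma hmap_id_ext (X : Fun) (a : Nat X X) :
  is_ofun X -> (forall A x, a A x = x) -> forall A x, hmap H a A x = x.
Proof.
  intros hX ha A x; rewrite (hmap_ext H X X a (idnat X) ha); apply hmap_idnat, hX.
Qed.

Lemma hmap_comp_ext (X Y W : Fun) (a : Nat X Y) (b : Nat Y W) (c : Nat X W) :
  is_ofun X -> is_ofun Y -> is_ofun W -> is_nat a -> is_nat b ->
  (forall A x, c A x = b A (a A x)) ->
  forall A x, hmap H c A x = hmap H b A (hmap H a A x).
Proof.
  intros hX hY hW ha hb hc A x.
  rewrite (hmap_ext H X W c (vcomp b a) hc); apply hmap_vcomp; assumption.
Qed.

Lemma hmap_comm_square (X Y Y' W : Fun)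
    (a : Nat X Y) (b : Nat Y W) (c : Nat X Y') (d : Nat Y' W) :
  is_ofun X -> is_ofun Y -> is_ofun Y' -> is_ofun W ->
  is_nat a -> is_nat b -> is_nat c -> is_nat d ->
  (forall A x, b A (a A x) = d A (c A x)) ->
  forall A x, hmap H b A (hmap H a A x) = hmap H d A (hmap H c A x).
Proof.
  intros hX hY hY' hW ha hb hc hd hsq A x.
  rewrite <- !hmap_vcomp by assumption; apply hmap_ext, hsq.
Qed.

End EndoOmega.

#[local] Hint Resolve is_ofun_hob is_nat_hmap : core.

Lemma is_endo_omega_Id2 : is_endo_omega Id2.
Proof.
  split; [|split; [|split; [|split]]]; simpl; auto.
Qed.

Lemma is_endo_omega_compF2 (H K : Fun2) :
  is_endo_omega H -> is_endo_omega K -> is_endo_omega (compF2 H K).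
Proof.
  intros hH hK; split; [|split; [|split; [|split]]]; simpl; auto.
  - intros X hX; apply hmap_id_ext; auto; apply hmap_idnat; auto.
  - intros X Y W a b hX hY hW ha hb.
    apply hmap_comp_ext; auto; apply hmap_vcomp; auto.
  - intros Xs al C c hchain hcolim.
    assert (hKchain : is_chain_End (fun n => hob K (Xs n)) (fun n => hmap K (al n))).
    { destruct hchain as [hXs hal]; split; intros n; auto. }
    destruct hH as [_ [_ [_ [_ H_cocont]]]], hK as [_ [_ [_ [_ K_cocont]]]].
    apply H_cocont, K_cocont; assumption.
Qed.

Lemma is_strength_unit : is_strength Id2 (ar_th sar_unit).
Proof.
  split; [|split; [|split; [|split]]]; simpl; try reflexivity.
  intros X Z e _ _ A B f x; reflexivity.
Qed.

Section TensorStrength.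
Variables (H K : Fun2) (rho : theta_ty H) (sig : theta_ty K).
Hypotheses (hH : is_endo_omega H) (hK : is_endo_omega K).
Hypotheses (hrho : is_strength H rho) (hsig : is_strength K sig).

Lemma is_strength_tensor :
  is_strength (compF2 H K) (ar_th (sar_tensor (MkSArity H rho) (MkSArity K sig))).
Proof.
  destruct hrho as [rho_nat [rho_natX [rho_natZ [rho_unit rho_comp]]]].
  destruct hsig as [sig_nat [sig_natX [sig_natZ [sig_unit sig_comp]]]].
  split; [|split; [|split; [|split]]]; simpl.
  - intros X Z e hX [hZ he].
    apply (is_nat_vcomp _ _ _ (hmap H (sig X Z e)) (rho (hob K X) Z e)); auto.
  - intros X X' Z e al hX hX' hal [hZ he] A x.
    rewrite (hmap_comm_square H hH _ _ _ _
               (sig X Z e) (hmap K (whiskerR Z al))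
               (whiskerR Z (hmap K al)) (sig X' Z e)) by auto.
    f_equal; apply rho_natX; auto.
  - intros X Z Z' e e' f hX [hZ he] [hZ' he'] hf hfe A x.
    rewrite (hmap_comm_square H hH _ _ _ _
               (sig X Z e) (hmap K (whiskerL X f))
               (whiskerL (hob K X) f) (sig X Z' e')) by auto.
    f_equal; apply rho_natZ; auto.
  - intros X hX A x.
    rewrite rho_unit by auto.
    apply hmap_id_ext; auto; apply sig_unit, hX.
  - intros X Z1 Z2 e1 e2 hX hZ1 hZ2 A x.
    pose proof hZ1 as [hZ1_ofun he1]; pose proof hZ2 as [hZ2_ofun he2].
    rewrite rho_comp, <- rho_natX by auto.
    apply hmap_comp_ext; auto.
    intros B y; apply sig_comp; auto.
Qed.

End TensorStrength.

Lemma is_sarity_unit : is_sarity sar_unit.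
Proof. split; [exact is_endo_omega_Id2 | exact is_strength_unit]. Qed.

Lemma is_sarity_tensor (a b : SArity) :
  is_sarity a -> is_sarity b -> is_sarity (sar_tensor a b).
Proof.
  destruct a as [H rho], b as [K sig]; intros [hH hrho] [hK hsig]; split.
  - apply is_endo_omega_compF2; assumption.
  - apply is_strength_tensor; assumption.
Qed.

Lemma is_sarity_mor_sid (a : SArity) : is_sarity_mor a a (sid a).
Proof. split; [|split]; intros; try reflexivity; intros B C f y; reflexivity. Qed.

Lemma is_sarity_mor_scomp (a b c : SArity) (n : SHom a b) (m : SHom b c) :
  is_sarity_mor a b n -> is_sarity_mor b c m -> is_sarity_mor a c (scomp m n).
Proof.
  intros [n_nat [n_natX n_th]] [m_nat [m_natX m_th]]; unfold scomp.
  split; [|split].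
  - intros X hX; apply (is_nat_vcomp _ _ _ (m X) (n X)); auto.
  - intros X Y al hX hY hal A x; rewrite m_natX, n_natX; auto.
  - intros X Z e hX hZ A x; rewrite n_th, m_th; auto.
Qed.

Lemma is_sarity_mor_tensor (a a' b b' : SArity) (m : SHom a a') (n : SHom b b') :
  is_sarity a -> is_sarity b -> is_sarity b' ->
  is_sarity_mor a a' m -> is_sarity_mor b b' n ->
  is_sarity_mor (sar_tensor a b) (sar_tensor a' b') (tensor_mor m n).
Proof.
  destruct a as [H rho], a' as [H' rho'], b as [K sig], b' as [K' sig'].
  intros [hH [_ [rho_natX _]]] [hK [sig_nat _]] [hK' [sig'_nat _]]
         [m_nat [m_natX m_th]] [n_nat [n_natX n_th]].
  simpl in *; unfold is_sarity_mor, tensor_mor; cbn.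
  split; [|split].
  - intros X hX; apply (is_nat_vcomp _ _ _ (m (hob K' X)) (hmap H (n X))); auto.
  - intros X Y al hX hY hal A x.
    rewrite m_natX by auto; f_equal.
    apply (hmap_comm_square H hH); auto.
  - intros X Z e hX [hZ he] A x.
    rewrite <- m_th, m_natX by auto; f_equal.
    rewrite <- rho_natX by auto.
    apply (hmap_comm_square H hH); auto.
Qed.

Lemma tensor_mor_sid (a b : SArity) :
  is_sarity a -> is_sarity b -> mor_eq (tensor_mor (sid a) (sid b)) (sid (sar_tensor a b)).
Proof.
  intros [hH _] [hK _] X hX A x; apply (hmap_idnat _ hH); auto.
Qed.

Lemma tensor_mor_scomp (a a' a'' b b' b'' : SArity)
    (m : SHom a a') (m' : SHom a' a'') (n : SHom b b') (n' : SHom b' b'') :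
  is_sarity a -> is_sarity b -> is_sarity b' -> is_sarity b'' ->
  is_sarity_mor a a' m -> is_sarity_mor b b' n -> is_sarity_mor b' b'' n' ->
  mor_eq (tensor_mor (scomp m' m) (scomp n' n))
         (scomp (tensor_mor m' n') (tensor_mor m n)).
Proof.
  intros [hH _] [hK _] [hK' _] [hK'' _] [_ [m_natX _]] [n_nat _] [n'_nat _] X hX A x.
  unfold tensor_mor, scomp; f_equal.
  rewrite m_natX by auto; f_equal.
  apply (hmap_vcomp _ hH); auto.
Qed.

Lemma sar_tensorA (a b c : SArity) :
  is_sarity a -> is_sarity b -> is_sarity c ->
  obj_eq (sar_tensor (sar_tensor a b) c) (sar_tensor a (sar_tensor b c)).
Proof.
  intros [hH _] [hK [sig_nat _]] [hL [tau_nat _]]; exists eq_refl; simpl.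
  intros X Z e hX [hZ he] A x; symmetry.
  apply (hmap_vcomp _ hH); auto.
Qed.

Lemma sar_tensor1s (a : SArity) : obj_eq (sar_tensor sar_unit a) a.
Proof. exists eq_refl; reflexivity. Qed.

Lemma sar_tensors1 (a : SArity) : is_sarity a -> obj_eq (sar_tensor a sar_unit) a.
Proof.
  intros [hH _]; exists eq_refl; simpl.
  intros X Z e hX [hZ he] A x; apply (hmap_idnat _ hH); auto.
Qed.

Lemma tensor_morA (a a' b b' c c' : SArity) (m : SHom a a') (n : SHom b b') (p : SHom c c') :
  is_sarity a -> is_sarity b -> is_sarity b' -> is_sarity c -> is_sarity c' ->
  is_sarity_mor b b' n -> is_sarity_mor c c' p ->
  @mor_eq (sar_tensor (sar_tensor a b) c) (sar_tensor (sar_tensor a' b') c')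
    (tensor_mor (tensor_mor m n) p) (tensor_mor m (tensor_mor n p)).
Proof.
  intros [hH _] [hK _] [hK' _] [hL _] [hL' _] [n_nat _] [p_nat _] X hX A x.
  unfold tensor_mor; simpl; f_equal; symmetry.
  apply (hmap_vcomp _ hH); auto.
Qed.

Lemma tensor_mor1s (a a' : SArity) (m : SHom a a') :
  @mor_eq a a' (tensor_mor (sid sar_unit) m) m.
Proof. intros X hX A x; reflexivity. Qed.

Lemma tensor_mors1 (a a' : SArity) (m : SHom a a') :
  is_sarity a -> @mor_eq a a' (tensor_mor m (sid sar_unit)) m.
Proof.
  intros [hH _] X hX A x; unfold tensor_mor; simpl; f_equal.
  apply (hmap_idnat _ hH), hX.
Qed.

Theorem proposition2 :
  (* category: identities and composites are morphisms; unit and associativity laws *)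
  (forall a, is_sarity a -> is_sarity_mor a a (sid a)) /\
  (forall a b c (n : SHom a b) (m : SHom b c),
      is_sarity a -> is_sarity b -> is_sarity c ->
      is_sarity_mor a b n -> is_sarity_mor b c m -> is_sarity_mor a c (scomp m n)) /\
  (forall a b (m : SHom a b), is_sarity a -> is_sarity b -> is_sarity_mor a b m ->
      mor_eq (scomp (sid b) m) m /\ mor_eq (scomp m (sid a)) m) /\
  (forall a b c d (l : SHom a b) (m : SHom b c) (n : SHom c d),
      is_sarity a -> is_sarity b -> is_sarity c -> is_sarity d ->
      is_sarity_mor a b l -> is_sarity_mor b c m -> is_sarity_mor c d n ->
      mor_eq (scomp n (scomp m l)) (scomp (scomp n m) l)) /\
  (* tensor: unit object, tensor of objects, tensor of morphisms *)
  is_sarity sar_unit /\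
  (forall a b, is_sarity a -> is_sarity b -> is_sarity (sar_tensor a b)) /\
  (forall a a' b b' (m : SHom a a') (n : SHom b b'),
      is_sarity a -> is_sarity a' -> is_sarity b -> is_sarity b' ->
      is_sarity_mor a a' m -> is_sarity_mor b b' n ->
      is_sarity_mor (sar_tensor a b) (sar_tensor a' b') (tensor_mor m n)) /\
  (* bifunctoriality of the tensor *)
  (forall a b, is_sarity a -> is_sarity b ->
      mor_eq (tensor_mor (sid a) (sid b)) (sid (sar_tensor a b))) /\
  (forall a a' a'' b b' b'' (m : SHom a a') (m' : SHom a' a'')
          (n : SHom b b') (n' : SHom b' b''),
      is_sarity a -> is_sarity a' -> is_sarity a'' ->
      is_sarity b -> is_sarity b' -> is_sarity b'' ->
      is_sarity_mor a a' m -> is_sarity_mor a' a'' m' ->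
      is_sarity_mor b b' n -> is_sarity_mor b' b'' n' ->
      mor_eq (tensor_mor (scomp m' m) (scomp n' n))
             (scomp (tensor_mor m' n') (tensor_mor m n))) /\
  (* strictness on objects *)
  (forall a b c, is_sarity a -> is_sarity b -> is_sarity c ->
      obj_eq (sar_tensor (sar_tensor a b) c) (sar_tensor a (sar_tensor b c))) /\
  (forall a, is_sarity a ->
      obj_eq (sar_tensor sar_unit a) a /\ obj_eq (sar_tensor a sar_unit) a) /\
  (* strictness on morphisms *)
  (forall a a' b b' c c' (m : SHom a a') (n : SHom b b') (p : SHom c c'),
      is_sarity a -> is_sarity a' -> is_sarity b -> is_sarity b' ->
      is_sarity c -> is_sarity c' ->
      is_sarity_mor a a' m -> is_sarity_mor b b' n -> is_sarity_mor c c' p ->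
      @mor_eq (sar_tensor (sar_tensor a b) c) (sar_tensor (sar_tensor a' b') c')
        (tensor_mor (tensor_mor m n) p) (tensor_mor m (tensor_mor n p))) /\
  (forall a a' (m : SHom a a'),
      is_sarity a -> is_sarity a' -> is_sarity_mor a a' m ->
      @mor_eq a a' (tensor_mor (sid sar_unit) m) m /\
      @mor_eq a a' (tensor_mor m (sid sar_unit)) m).
Proof.
  split; [intros a _; apply is_sarity_mor_sid|].
  split; [intros a b c n m _ _ _; apply is_sarity_mor_scomp|].
  split; [intros a b m _ _ _; split; intros X _ A x; reflexivity|].
  split; [intros a b c d l m n _ _ _ _ _ _ _ X _ A x; reflexivity|].
  split; [exact is_sarity_unit|].
  split; [exact is_sarity_tensor|].
  split; [intros a a' b b' m n ha _ hb hb'; apply is_sarity_mor_tensor; assumption|].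
  split; [exact tensor_mor_sid|].
  split; [intros a a' a'' b b' b'' m m' n n' ha _ _ hb hb' hb'' hm _ hn hn';
          apply tensor_mor_scomp; assumption|].
  split; [exact sar_tensorA|].
  split; [intros a ha; split; [apply sar_tensor1s | apply sar_tensors1, ha]|].
  split; [intros a a' b b' c c' m n p ha _ hb hb' hc hc' _ hn hp;
          apply tensor_morA; assumption|].
  intros a a' m ha _ _; split; [apply tensor_mor1s | apply tensor_mors1, ha].
Qed.
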